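(* For any $n$-node graph $G$ and any $r\in\mathbb{N}$, the existence of an $r$-cycle in $G$ can be detected within $\lfloor (r-1)/2\rfloor+\mathcal{O}(\log n/\log\log n)$ rounds of the $\mathsf{HYBRID}$ model.
   Context: Distributed setting: $n$ nodes with unique IDs in $\{1,\dots,n\}$; local communication graph $G$ undirected; each node initially knows only its neighbors' IDs; synchronous rounds, unlimited local computation. In the $\mathsf{HYBRID}$ model, in every round each node may send a message of arbitrary size to each neighbor (local mode) and may additionally send and receive $\mathcal{O}(\log n)$-bit messages to/from up to $\mathcal{O}(\log n)$ arbitrary nodes (global mode); excess messages are dropped arbitrarily. An $r$-cycle is a cycle of length $r$; detection means every node learns whether $G$ contains an $r$-cycle. *)

From mathcomp Require Import all_boot.
Set Warnings "-notation-overridden".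
Set Implicit Arguments. Unset Strict Implicit. Unset Printing Implicit Defensive.

(* Nodes are 'I_n; node v has ID v+1 (so IDs are exactly {1..n}).
   A graph is a symmetric irreflexive relation adj on 'I_n. *)

Definition has_rcycle (n : nat) (adj : rel 'I_n) (r : nat) : Prop :=
  3 <= r /\ exists s : seq 'I_n, [/\ size s = r, uniq s & cycle adj s].

Record hybrid_alg (n : nat) := HybridAlg {
  hstate : Type;
  hlmsg : Type;                                   (* local messages: arbitrary size *)
  hinit : 'I_n -> {set 'I_n} -> hstate;           (* own ID, neighbours' IDs *)
  hlsend : hstate -> 'I_n -> hlmsg;
  hgsend : hstate -> seq ('I_n * seq bool);       (* global messages: (target, bits) *)
  hstep : hstate -> ('I_n -> option hlmsg) -> seq ('I_n * seq bool) -> hstate;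
  hout : hstate -> bool }.

(* global capacity lambda = c0 * (floor(log2 n) + 1): both the max number of
   bits of a global message and the max number of global messages a node may
   send / receive per round. *)
Definition hcap (n c0 : nat) : nat := c0 * (trunc_log 2 n).+1.

(* Global messages addressed to v in a round (sender ID attached); a node's
   messages beyond the first lam and bits beyond the first lam are dropped. *)
Definition global_pool n (A : hybrid_alg n) (lam : nat) (st : 'I_n -> hstate A)
    (v : 'I_n) : seq ('I_n * seq bool) :=
  flatten [seq [seq (u, take lam p.2) | p <- filter (fun p => p.1 == v)
                                                    (take lam (hgsend (st u)))]
          | u <- enum 'I_n].

(* The delivered global messages: an arbitrary sub-multiset (in arbitrary
   order) of the pool of size min(lam, |pool|): excess dropped arbitrarily. *)
Definition delivery_ok n (lam : nat) (pool D : seq ('I_n * seq bool)) : Prop :=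
  (exists m : bitseq, perm_eq D (mask m pool)) /\ size D = minn lam (size pool).

Definition local_in n (A : hybrid_alg n) (adj : rel 'I_n) (st : 'I_n -> hstate A)
    (v : 'I_n) : 'I_n -> option (hlmsg A) :=
  fun u => if adj u v then Some (hlsend (st u) v) else None.

Definition hybrid_round n (A : hybrid_alg n) (adj : rel 'I_n) (lam : nat)
    (st st' : 'I_n -> hstate A) : Prop :=
  forall v, exists D, delivery_ok lam (global_pool lam st v) D /\
    st' v = hstep (st v) (local_in adj st v) D.

Definition hybrid_exec n (A : hybrid_alg n) (adj : rel 'I_n) (lam T : nat)
    (ex : nat -> 'I_n -> hstate A) : Prop :=
  (forall v, ex 0 v = hinit A v [set u | adj v u]) /\
  (forall t, t < T -> hybrid_round adj lam (ex t) (ex t.+1)).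

(* After T rounds, in every execution (every adversarial dropping), every node
   outputs whether G contains an r-cycle. *)
Definition detects_within n (A : hybrid_alg n) (adj : rel 'I_n) (lam r T : nat)
    : Prop :=
  forall ex : nat -> 'I_n -> hstate A, hybrid_exec adj lam T ex ->
    forall v, hout (ex T v) <-> has_rcycle adj r.

From mathcomp Require Import all_boot zify.
Set Implicit Arguments. Unset Strict Implicit. Unset Printing Implicit Defensive.

(* Every node floods the set of edges it knows to its neighbours, so after [t]
   rounds node [v] knows exactly the edges with an endpoint at distance at most
   [t] from [v].  An [r]-cycle through [w] splits into two arcs from [w] of at
   most [(r-1)/2 + 1] edges each, so after [(r-1)/2] rounds [w] sees the whole
   cycle, while no node ever sees an edge outside [G].  A node that has found a
   cycle then spreads a single bit along the implicit [lam]-ary tree on IDs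
   (parent [v / lam], children [v * lam + j]): up to the root for [D] rounds,
   then down to every node for [D] more rounds, where [D = log n / log log n + 2]
   satisfies [n <= lam ^ D] because [lam > log n].  Every global message is
   empty, each node sends at most [lam] of them, and a node that is sent at
   least one message receives at least one, so adversarial dropping never loses
   the bit. *)

Section Balls.
Variables (T : finType) (e : rel T).

Fixpoint ball (t : nat) (v a : T) : bool :=
  if t is t'.+1 then ball t' v a || [exists u, e u v && ball t' u a] else a == v.

Lemma ball_addr t k v a : ball t v a -> ball (t + k) v a.
Proof. by elim: k => [|k IHk]; rewrite ?addn0 // addnS /= => /IHk ->. Qed.

Lemma ball_center t v : ball t v v.
Proof. by rewrite -[t]add0n; apply: ball_addr; rewrite /= eqxx. Qed.

Lemma ball_adj t u v a : e u v -> ball t u a -> ball t.+1 v a.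
Proof. by move=> euv uta /=; apply/orP; right; apply/existsP; exists u; rewrite euv. Qed.

Definition ball_edge t w : rel T :=
  fun a b => (ball t w a && e a b) || (ball t w b && e b a).

Hypothesis e_sym : symmetric e.

Lemma path_ball x p t :
  path e x p -> size p <= t.+1 -> path [rel a b | ball t x a && e a b] x p.
Proof.
elim: p x t => [//|y p IHp] x t /= /andP[exy yp] size_p.
rewrite ball_center exy /=.
case: p IHp yp size_p => [//|z p] IHp yp size_p.
case: t size_p => [//|t] size_p.
apply: sub_path (IHp y t yp size_p) => a b /= /andP[yta ->]; rewrite andbT.
by apply: ball_adj yta; rewrite e_sym.
Qed.

(* The first [t + 1] edges of the cycle are walked forward from [w], the
   remaining ones backward; both walks stay within distance [t] of [w]. *)
Lemma cycle_ball_edge t w q :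
  size q <= t.*2.+1 -> cycle e (w :: q) -> cycle (ball_edge t w) (w :: q).
Proof.
move=> size_q; rewrite /= -(cat_take_drop t.+1 (rcons q w)) !cat_path.
case/andP=> arc1 arc2; apply/andP; split.
  have size_arc1 : size (take t.+1 (rcons q w)) <= t.+1 by rewrite size_take_min geq_minl.
  by apply: sub_path (path_ball arc1 size_arc1) => a b /= h; rewrite /ball_edge h.
set y := last w _ in arc2 *; set p := drop _ _ in arc2 *.
have last_p : last y p = w by rewrite /y /p -last_cat cat_take_drop last_rcons.
have rev_arc2 : path e w (rev (belast y p)).
  by rewrite -last_p rev_path; apply: sub_path arc2 => a b; rewrite e_sym.
have size_arc2 : size (rev (belast y p)) <= t.+1.
  by rewrite size_rev size_belast /p size_drop size_rcons; lia.
have := path_ball rev_arc2 size_arc2; rewrite -last_p rev_path last_p.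
by apply: sub_path => a b /= h; rewrite /ball_edge h orbT.
Qed.

End Balls.

Definition known_rel (T : finType) (K : {set T * T}) : rel T :=
  fun a b => ((a, b) \in K) || ((b, a) \in K).

Definition cycle_among n r (K : {set 'I_n * 'I_n}) : bool :=
  (2 < r) && [exists s : r.-tuple 'I_n, uniq s && cycle (known_rel K) s].

Definition radius r := (r.-1)./2.

Section CycleAmong.
Variables (n : nat) (adj : rel 'I_n) (r : nat) (K : {set 'I_n * 'I_n}).
Hypothesis adj_sym : symmetric adj.

Lemma cycle_among_sound :
  (forall a b, (a, b) \in K -> adj a b) -> cycle_among r K -> has_rcycle adj r.
Proof.
move=> adjK /andP[r_gt2 /existsP[s /andP[s_uniq s_cycle]]]; split=> //.
exists (val s); split; rewrite ?size_tuple //.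
by apply: sub_cycle s_cycle => a b /orP[/adjK | /adjK]; rewrite // adj_sym.
Qed.

Lemma cycle_among_ball w q :
  (forall a b, ((a, b) \in K) = ball adj (radius r) w a && adj a b) ->
  3 <= r -> size (w :: q) = r -> uniq (w :: q) -> cycle adj (w :: q) ->
  cycle_among r K.
Proof.
move=> K_ball r_gt2 size_wq wq_uniq wq_cycle; rewrite /cycle_among r_gt2.
have /eqP size_wq' := size_wq; apply/existsP; exists (Tuple size_wq').
have size_q : size q <= (radius r).*2.+1.
  by rewrite -size_wq /= -[X in X <= _]odd_double_half; case: odd.
apply/andP; split=> //; apply: sub_cycle (cycle_ball_edge adj_sym size_q wq_cycle).
by move=> a b; rewrite /known_rel /ball_edge !K_ball.
Qed.

End CycleAmong.

Definition tree_depth n := trunc_log 2 n %/ trunc_log 2 (trunc_log 2 n) + 2.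

(* With [L = log n] and [LL = log L]:
   [n < 2 ^ (L + 1) <= (2 ^ LL) ^ (L / LL + 2) <= b ^ (L / LL + 2)],
   as [L + 1 <= LL * (L / LL + 1)] and [2 ^ LL <= L < b]. *)
Lemma leq_exp_tree_depth n b : trunc_log 2 n < b -> n <= b ^ tree_depth n.
Proof.
rewrite /tree_depth; set L := trunc_log 2 n; set LL := trunc_log 2 L => L_lt_b.
have n_lt : n < 2 ^ L.+1 by apply: trunc_log_ltn.
have [L0|L_gt0] := posnP L.
  have n_le1 : n <= 1 by move: n_lt; rewrite L0.
  by apply: leq_trans n_le1 _; rewrite expn_gt0; lia.
apply: leq_trans (ltnW n_lt) _.
have [LL0|LL_gt0] := posnP LL.
  have L_lt : L < 2 ^ LL.+1 by apply: trunc_log_ltn.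
  have L1 : L = 1 by move: L_lt; rewrite LL0; lia.
  rewrite L1 in L_lt_b *; rewrite LL0 divn0 add0n leq_exp2r //; lia.
have LL_le : 2 ^ LL <= L by apply: trunc_logP.
apply: (@leq_trans ((2 ^ LL) ^ (L %/ LL + 2))).
  rewrite -expnM leq_exp2l //.
  have := divn_eq L LL; have := ltn_pmod L LL_gt0; nia.
rewrite leq_exp2r ?addn2 //; lia.
Qed.

Lemma hcap_gt_log n c0 : 0 < c0 -> trunc_log 2 n < hcap n c0.
Proof. by move=> c0_gt0; rewrite /hcap leq_pmull. Qed.

Section GlobalPool.
Variables (n : nat) (A : hybrid_alg n) (lam : nat) (st : 'I_n -> hstate A).

Lemma global_pool_sender v x :
  x \in global_pool lam st v -> exists2 p, p \in hgsend (st x.1) & p.1 = v.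
Proof.
case/flattenP=> _ /mapP[u _ ->] /mapP[p]; rewrite mem_filter => /andP[/eqP pv p_in] ->.
by exists p => //; apply: mem_take p_in.
Qed.

Lemma mem_global_pool u v bits :
  (v, bits) \in take lam (hgsend (st u)) -> (u, take lam bits) \in global_pool lam st v.
Proof.
move=> sent; apply/flattenP.
exists [seq (u, take lam p.2) | p <- filter (fun p => p.1 == v) (take lam (hgsend (st u)))].
  by apply: map_f; rewrite mem_enum.
by apply/mapP; exists (v, bits); rewrite // mem_filter eqxx.
Qed.

End GlobalPool.

Lemma delivery_ok_nil n lam (pool D : seq ('I_n * seq bool)) :
  0 < lam -> delivery_ok lam pool D -> (D == [::]) = (pool == [::]).
Proof.
move=> lam_gt0 [_ size_D]; rewrite -!size_eq0 size_D {size_D}.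
case: (size pool) => [|k]; rewrite ?minn0 //.
by apply/negbTE; rewrite -lt0n leq_min lam_gt0.
Qed.

Record node_state n := NodeState {
  nid : 'I_n; nround : nat; nedges : {set 'I_n * 'I_n}; nfound : bool }.

Definition tree_parent n lam (v : 'I_n) : 'I_n := insubd v (v %/ lam).
Definition tree_child n lam (v : 'I_n) j : 'I_n := insubd v (v * lam + j).

Definition cd_gsend n r c0 (st : node_state n) : seq ('I_n * seq bool) :=
  let lam := hcap n c0 in
  if nfound st then
    if nround st < radius r + tree_depth n then [:: (tree_parent lam (nid st), [::])]
    else [seq (tree_child lam (nid st) j, [::]) | j <- iota 0 lam]
  else [::].

Definition cd_step n r (st : node_state n) (M : 'I_n -> option {set 'I_n * 'I_n})
    (D : seq ('I_n * seq bool)) : node_state n :=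
  let K := nedges st :|: \bigcup_u odflt set0 (M u) in
  NodeState (nid st) (nround st).+1 K [|| nfound st, cycle_among r K | D != [::]].

Definition star_edges n (v : 'I_n) (N : {set 'I_n}) : {set 'I_n * 'I_n} :=
  [set p | (p.1 == v) && (p.2 \in N)].

Definition cycle_detector n r c0 : hybrid_alg n :=
  @HybridAlg n (node_state n) {set 'I_n * 'I_n}
    (fun v N => NodeState v 0 (star_edges v N) (cycle_among r (star_edges v N)))
    (fun st _ => nedges st) (@cd_gsend n r c0) (@cd_step n r) (@nfound n).

Section Execution.
Variables (n r c0 : nat) (adj : rel 'I_n) (T : nat).
Hypotheses (c0_gt0 : 0 < c0) (adj_sym : symmetric adj).
Variable ex : nat -> 'I_n -> hstate (cycle_detector n r c0).
Hypothesis ex_exec : hybrid_exec adj (hcap n c0) T ex.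

Local Notation lam := (hcap n c0).

Lemma lam_gt0 : 0 < lam.
Proof. exact: leq_ltn_trans (leq0n _) (hcap_gt_log n c0_gt0). Qed.

Lemma exec_step t v : t < T -> exists D,
  delivery_ok lam (global_pool lam (ex t) v) D /\
  ex t.+1 v = cd_step r (ex t v) (local_in adj (ex t) v) D.
Proof. by move=> t_lt; case: ex_exec => _ /(_ t t_lt v). Qed.

Lemma exec_id t v : t <= T -> nid (ex t v) = v.
Proof.
elim: t => [|t IHt] t_le; first by case: ex_exec => ->.
by have [D [_ ->]] := exec_step v t_le; apply: IHt; apply: ltnW.
Qed.

Lemma exec_round t v : t <= T -> nround (ex t v) = t.
Proof.
elim: t => [|t IHt] t_le; first by case: ex_exec => ->.
by have [D [_ ->]] := exec_step v t_le; rewrite /= IHt // ltnW.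
Qed.

Lemma exec_edges t v a b : t <= T ->
  ((a, b) \in nedges (ex t v)) = ball adj t v a && adj a b.
Proof.
elim: t v => [|t IHt] v t_le.
  by case: ex_exec => -> _; rewrite inE /=; case: eqP => // ->; rewrite inE.
have {}IHt u := IHt u (ltnW t_le).
have [D [_ ->]] := exec_step v t_le; rewrite /= in_setU IHt andb_orl.
congr (_ || _); apply/bigcupP/idP => [[u _]|/andP[/existsP[u /andP[uv u_a]] ab]].
  rewrite /local_in; case: ifP => [uv|_]; last by rewrite inE.
  by rewrite IHt => /andP[u_a ->]; rewrite andbT; apply/existsP; exists u; rewrite uv.
by exists u => //; rewrite /local_in uv /= IHt u_a.
Qed.

Lemma found_of_cycle_among t v :
  t <= T -> cycle_among r (nedges (ex t v)) -> nfound (ex t v).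
Proof.
case: t => [|t] t_le; first by case: ex_exec => ->.
by have [D [_ ->]] := exec_step v t_le; rewrite /= => ->; rewrite orbT.
Qed.

Lemma cd_gsend_found p (st : node_state n) : p \in cd_gsend r c0 st -> nfound st.
Proof. by rewrite /cd_gsend; case: nfound. Qed.

Lemma found_sound t v : t <= T -> nfound (ex t v) -> has_rcycle adj r.
Proof.
elim: t v => [|t IHt] v t_le.
  case: ex_exec => -> _ /=; apply: cycle_among_sound => // a b.
  by rewrite inE /= => /andP[/eqP -> ]; rewrite inE.
have {}IHt u := IHt u (ltnW t_le).
have [D [deliv ex_v]] := exec_step v t_le.
rewrite ex_v /= => /or3P[/IHt //|found_K|].
  apply: cycle_among_sound found_K => // a b.
  by have := exec_edges v a b t_le; rewrite ex_v /= => -> /andP[].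
rewrite (delivery_ok_nil lam_gt0 deliv).
case pool_v : (global_pool _ _ _) => [//|x pool] _.
have /global_pool_sender[p p_in _] : x \in global_pool lam (ex t) v by rewrite pool_v mem_head.
exact: IHt x.1 (cd_gsend_found p_in).
Qed.

Lemma found_mono t t' v : t <= t' -> t' <= T -> nfound (ex t v) -> nfound (ex t' v).
Proof.
move=> /subnKC <-; elim: (t' - t) => [|k IHk]; rewrite ?addn0 // addnS => le_T found_t.
by have [D [_ ->]] := exec_step v le_T; rewrite /= (IHk (ltnW le_T) found_t).
Qed.

Lemma found_recv t u v bits : t < T ->
  (v, bits) \in hgsend (ex t u) -> size (hgsend (ex t u)) <= lam -> nfound (ex t.+1 v).
Proof.
move=> t_lt sent size_le; have [D [deliv ->]] := exec_step v t_lt.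
rewrite -(take_oversize size_le) in sent.
have pool_v : global_pool lam (ex t) v != [::].
  by apply/eqP => nil_pool; have := mem_global_pool sent; rewrite nil_pool.
by rewrite /= (delivery_ok_nil lam_gt0 deliv) pool_v !orbT.
Qed.

Lemma found_up w j : radius r + j <= T -> j <= tree_depth n ->
  nfound (ex (radius r) w) ->
  forall x : 'I_n, val x = w %/ lam ^ j -> nfound (ex (radius r + j) x).
Proof.
elim: j => [|j IHj] j_le j_depth found_w x x_val.
  by rewrite addn0 (_ : x = w) //; apply: val_inj; rewrite x_val expn0 divn1.
have y_lt : w %/ lam ^ j < n by apply: leq_ltn_trans (leq_div _ _) (ltn_ord w).
have t_lt : radius r + j < T by rewrite -addnS.
have found_y := IHj (ltnW t_lt) (ltnW j_depth) found_w (Ordinal y_lt) erefl.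
have sent : hgsend (ex (radius r + j) (Ordinal y_lt)) = [:: (x, [::])].
  rewrite /= /cd_gsend found_y exec_round ?(ltnW t_lt) // exec_id ?(ltnW t_lt) //.
  rewrite ltn_add2l j_depth; congr [:: (_, _)]; apply: val_inj.
  by rewrite val_insubd /= -divnMA -expnSr -x_val ltn_ord.
rewrite addnS; apply: (found_recv (u := Ordinal y_lt) (bits := [::]) t_lt).
  by rewrite sent mem_head.
by rewrite sent lam_gt0.
Qed.

Lemma found_down j : radius r + tree_depth n + j <= T ->
  (forall x : 'I_n, val x = 0 -> nfound (ex (radius r + tree_depth n) x)) ->
  forall x : 'I_n, val x < lam ^ j -> nfound (ex (radius r + tree_depth n + j) x).
Proof.
elim: j => [|j IHj] j_le found_root x x_lt.
  by rewrite addn0; apply: found_root; move: x_lt; rewrite expn0; case: (val x).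
have y_lt : x %/ lam < n by apply: leq_ltn_trans (leq_div _ _) (ltn_ord x).
have t_lt : radius r + tree_depth n + j < T by rewrite -addnS.
have y_lt_exp : val (Ordinal y_lt) < lam ^ j by rewrite /= ltn_divLR ?lam_gt0 // -expnSr.
have found_y := IHj (ltnW t_lt) found_root _ y_lt_exp.
have sent : hgsend (ex (radius r + tree_depth n + j) (Ordinal y_lt)) =
    [seq (tree_child lam (Ordinal y_lt) i, [::]) | i <- iota 0 lam].
  rewrite /= /cd_gsend found_y exec_round ?(ltnW t_lt) // exec_id ?(ltnW t_lt) //.
  by rewrite ltnNge leq_addr.
rewrite addnS; apply: (found_recv (u := Ordinal y_lt) (bits := [::]) t_lt).
  rewrite sent; apply/mapP; exists (x %% lam); first by rewrite mem_iota ltn_pmod ?lam_gt0.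
  by congr (_, _); apply: val_inj; rewrite val_insubd /= -divn_eq ltn_ord.
by rewrite sent size_map size_iota.
Qed.

Lemma found_broadcast w v : radius r + tree_depth n + tree_depth n <= T ->
  nfound (ex (radius r) w) -> nfound (ex T v).
Proof.
move=> T_ge found_w; have n_le := leq_exp_tree_depth (hcap_gt_log n c0_gt0).
have found_root x : val x = 0 -> nfound (ex (radius r + tree_depth n) x).
  move=> x0; apply: (found_up _ (leqnn _) found_w).
    by apply: leq_trans T_ge; rewrite leq_addr.
  by rewrite x0 divn_small // (leq_trans (ltn_ord w) n_le).
apply: found_mono T_ge (leqnn T) (found_down T_ge found_root _).
exact: leq_trans (ltn_ord v) n_le.
Qed.

End Execution.

Theorem proposition35 :
  forall c0 : nat, 0 < c0 ->
  exists C : nat, forall n r : nat, exists A : hybrid_alg n,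
    forall adj : rel 'I_n, symmetric adj -> irreflexive adj ->
      detects_within A adj (hcap n c0) r
        ((r.-1)./2 + C * (trunc_log 2 n %/ trunc_log 2 (trunc_log 2 n)) + C).
Proof.
move=> c0 c0_gt0; exists 4 => n r; exists (cycle_detector n r c0).
move=> adj adj_sym _ ex ex_exec v; set T := _ + _ + 4 in ex_exec *.
have T_ge : radius r + tree_depth n + tree_depth n <= T.
  by rewrite /T /tree_depth /radius; move: (_ %/ _) (_./2) => k h; lia.
split=> [found_v|]; first exact (found_sound c0_gt0 adj_sym ex_exec (leqnn T) found_v).
case=> r_ge3 [[|w q] [size_wq wq_uniq wq_cycle]]; first by rewrite -size_wq in r_ge3.
have radius_le : radius r <= T by apply: leq_trans T_ge; rewrite -addnA leq_addr.
have K_ball a b := exec_edges ex_exec w a b radius_le.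
have found_w := found_of_cycle_among ex_exec radius_le
  (cycle_among_ball adj_sym K_ball r_ge3 size_wq wq_uniq wq_cycle).
exact (found_broadcast c0_gt0 ex_exec v T_ge found_w).
Qed.
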